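(* Under the saturation assumption below, each of the quantities $A_1=\sum_{\mathcal I\in\overline{\mathbb I}^*}\overline E_{\mathcal I}$, $A_2=1+\sum_{\mathcal I\in\mathbb I}T_{\mathcal I}$, $B_1=\sum_{\mathcal I\in\mathbb I^*}E_{\mathcal I}$, $B_2=1+\sum_{\mathcal I\in\overline{\mathbb I}}\overline T_{\mathcal I}$, $C_1=\sum_{\mathcal I\in\mathbb I^{-*}}E_{\mathcal I}$ (viewed as functions of $\delta\in(0,\bar\delta]$) can be written as $P(\delta)/D(\delta)$, where $P$ and $D$ are polynomials in $\delta$, $D$ is a finite product of factors of the form $|\alpha_{\mathcal E(\mathcal I)}|-|\alpha_{\mathcal I}|$ ($\mathcal I\in\mathbb I$) or $|\alpha_{\overline{\mathcal E}(\mathcal I)}|-|\alpha_{\mathcal I}|$ ($\mathcal I\in\overline{\mathbb I}$), and the constant term of $P$ is positive, i.e. $P(0)>0$.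
   Context: A matching model: finite connected simple graph $\mathcal G=(\mathcal V,\xi)$, $\mathcal V=\{1,\dots,n\}$, arrival distribution $\alpha$ on $\mathcal V$; FCFS policy (an arriving item of class $i$ is matched with the oldest present item whose class is a neighbour of $i$, otherwise it waits). $\mathcal E(i)$ is the neighbour set of $i$ in $\mathcal G$, $\mathcal E(V)=\bigcup_{i\in V}\mathcal E(i)$, $|\alpha_V|=\sum_{i\in V}\alpha_i$. An independent set is a non-empty set of pairwise non-adjacent nodes; $\mathbb I$ is the set of independent sets of $\mathcal G$. Fix distinct non-adjacent nodes $i^*,j^*$; $\overline{\mathcal G}$ is $\mathcal G$ with edge $\{i^*,j^*\}$ added, with neighbourhood map $\overline{\mathcal E}$ and set of independent sets $\overline{\mathbb I}$. $\mathbb I^*=\{\mathcal I\in\mathbb I: i^*\in\mathcal I\text{ or }j^*\in\mathcal I\}$, $\mathbb I^{-*}=\mathbb I\setminus\mathbb I^*$, $\overline{\mathbb I}^*=\{\mathcal I\in\overline{\mathbb I}: i^*\in\mathcal I\text{ or }j^*\in\mathcal I\}$. For $\mathcal I\in\mathbb I$ and an ordering $(i_1,\dots,i_m)$ of $\mathcal I$, with $\mathcal I_k=\{i_1,\dots,i_k\}$, set $T_{(i_1,\dots,i_m)}=\prod_{k=1}^m\frac{\alpha_{i_k}}{|\alpha_{\mathcal E(\mathcal I_k)}|-|\alpha_{\mathcal I_k}|}$ and $E_{(i_1,\dots,i_m)}=\sum_{l=1}^m\frac{|\alpha_{\mathcal E(\mathcal I_l)}|}{|\alpha_{\mathcal E(\mathcal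 I_l)}|-|\alpha_{\mathcal I_l}|}T_{(i_1,\dots,i_m)}$; $T_{\mathcal I}$, $E_{\mathcal I}$ are the sums over all orderings of $\mathcal I$. $\overline T_{\mathcal I},\overline E_{\mathcal I}$ ($\mathcal I\in\overline{\mathbb I}$) are defined identically with $\mathcal E$ replaced by $\overline{\mathcal E}$. Saturation assumption: $\alpha_i=a_i+b_i\delta$ with constants $a_i>0$, $b_i\in\mathbb R$, such that for all $\delta\in(0,\bar\delta]$ (some $\bar\delta>0$) $\alpha$ is a probability distribution satisfying the stability condition $|\alpha_{\mathcal I}|<|\alpha_{\mathcal E(\mathcal I)}|$ for all $\mathcal I\in\mathbb I$; moreover $\sum_{i\in\mathcal E(\hat{\mathcal I})}a_i-\sum_{i\in\hat{\mathcal I}}a_i=0$ for exactly one independent set $\hat{\mathcal I}\in\mathbb I$ (called saturated). *)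

From HB Require Import structures.
From mathcomp Require Import all_boot all_order all_algebra.
From mathcomp Require Import reals.
Set Implicit Arguments. Unset Strict Implicit. Unset Printing Implicit Defensive.
Import Order.TTheory GRing.Theory Num.Theory.
Local Open Scope ring_scope.

Section MatchingDefs.
Variables (R : realType) (n : nat).

Definition nbr (e : rel 'I_n) (V : {set 'I_n}) : {set 'I_n} :=
  [set j | [exists i in V, e i j]].

Definition wt (alpha : 'I_n -> R) (V : {set 'I_n}) : R := \sum_(i in V) alpha i.

Definition gap (e : rel 'I_n) (alpha : 'I_n -> R) (V : {set 'I_n}) : R :=
  wt alpha (nbr e V) - wt alpha V.

Definition indep (e : rel 'I_n) (I : {set 'I_n}) : bool :=
  (I != set0) && [forall i in I, forall j in I, ~~ e i j].

Definition prefset (s : seq 'I_n) (k : nat) : {set 'I_n} := [set x in take k s].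

Definition Tord (e : rel 'I_n) (alpha : 'I_n -> R) (s : seq 'I_n) : R :=
  \prod_(k < size s) (nth 0 (map alpha s) k / gap e alpha (prefset s k.+1)).

Definition Eord (e : rel 'I_n) (alpha : 'I_n -> R) (s : seq 'I_n) : R :=
  (\sum_(l < size s)
     wt alpha (nbr e (prefset s l.+1)) / gap e alpha (prefset s l.+1))
  * Tord e alpha s.

Definition Tset (e : rel 'I_n) (alpha : 'I_n -> R) (I : {set 'I_n}) : R :=
  \sum_(s <- permutations (enum I)) Tord e alpha s.
Definition Eset (e : rel 'I_n) (alpha : 'I_n -> R) (I : {set 'I_n}) : R :=
  \sum_(s <- permutations (enum I)) Eord e alpha s.

Definition addedge (e : rel 'I_n) (istar jstar : 'I_n) : rel 'I_n :=
  fun i j => [|| e i j, (i == istar) && (j == jstar) | (i == jstar) && (j == istar)].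

Definition alphad (a b : 'I_n -> R) (d : R) : 'I_n -> R := fun i => a i + b i * d.

Definition alphaP (a b : 'I_n -> R) (i : 'I_n) : {poly R} := (a i)%:P + (b i)%:P * 'X.

Definition gapP (e : rel 'I_n) (a b : 'I_n -> R) (I : {set 'I_n}) : {poly R} :=
  \sum_(i in nbr e I) alphaP a b i - \sum_(i in I) alphaP a b i.

(* Q (function of delta on (0, dbar]) is P(delta)/D(delta), with P, D polynomials,
   D a finite product of factors |alpha_{E(I)}|-|alpha_I| (I in II) or
   |alpha_{Ebar(I)}|-|alpha_I| (I in IIbar), and P(0) > 0.
   In a pair (I, c) of the list, c = true means a factor for G, c = false for Gbar. *)
Definition ratform (e ebar : rel 'I_n) (a b : 'I_n -> R) (dbar : R) (Q : R -> R) : Prop :=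
  exists (P : {poly R}) (l : seq ({set 'I_n} * bool)),
    (forall p, p \in l -> indep (if p.2 then e else ebar) p.1) /\
    (forall d, 0 < d <= dbar ->
       Q d = P.[d] / (\prod_(p <- l) gapP (if p.2 then e else ebar) a b p.1).[d]) /\
    0 < P.[0].

End MatchingDefs.

From HB Require Import structures.
From mathcomp Require Import all_boot all_order all_algebra.
From mathcomp Require Import reals.
From mathcomp Require Import ring lra.
Set Implicit Arguments. Unset Strict Implicit. Unset Printing Implicit Defensive.
Import Order.TTheory GRing.Theory Num.Theory.
Local Open Scope ring_scope.

Section LinearFactors.
Variables (R : realType) (dbar : R).
Hypothesis dbar_gt0 : 0 < dbar.

Definition admissible (g : {poly R}) : Prop :=
  exists c0 c1, [/\ g = c0%:P + c1%:P * 'X, 0 <= c0 &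
    forall d, 0 < d <= dbar -> 0 < g.[d]].

Lemma admissible_ge0 g : admissible g -> 0 <= g.[0].
Proof.
by case=> c0 [c1 [-> h0 _]]; rewrite hornerD hornerCM hornerX hornerC mulr0 addr0.
Qed.

Lemma admissible_pos g d : admissible g -> 0 < d <= dbar -> 0 < g.[d].
Proof. by case=> c0 [c1 [_ _ h]]; apply: h. Qed.

Lemma admissible_vanishing g :
  admissible g -> g.[0] = 0 -> g = (g.[1])%:P * 'X /\ 0 < g.[1].
Proof.
case=> c0 [c1 [-> _ h]].
have := h dbar; rewrite dbar_gt0 lexx => /(_ isT).
rewrite !(hornerD, hornerCM, hornerX, hornerC) mulr0 addr0 mulr1 => hd c0_eq0.
rewrite c0_eq0 polyC0 !add0r in hd *; split => //.
by rewrite -(pmulr_lgt0 _ dbar_gt0).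
Qed.

Lemma intercept_ge0 (c0 c1 : R) :
  (forall d, 0 < d <= dbar -> 0 < c0 + c1 * d) -> 0 <= c0.
Proof.
move=> H; rewrite leNgt; apply/negP => hc0.
have h1 : 0 < c0 + c1 * dbar by apply: H; rewrite dbar_gt0 lexx.
have c1p : 0 < c1 by rewrite -(pmulr_lgt0 _ dbar_gt0); lra.
pose d := - c0 / (2 * c1).
have c1d : c1 * d = - c0 / 2 by rewrite /d; field; rewrite gt_eqF.
have dp : 0 < d by rewrite /d divr_gt0 // ?oppr_gt0 // mulr_gt0.
have dle : d <= dbar by rewrite -(ler_pM2l c1p) c1d; lra.
have := H d; rewrite dp dle c1d => /(_ isT); lra.
Qed.

Lemma admissible_linear c0 c1 :
  (forall d, 0 < d <= dbar -> 0 < c0 + c1 * d) -> admissible (c0%:P + c1%:P * 'X).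
Proof.
move=> H; exists c0, c1; split => //; first exact: intercept_ge0 H.
by move=> d hd; rewrite !(hornerD, hornerCM, hornerX, hornerC); apply: H.
Qed.

End LinearFactors.

Section GraphFacts.
Variable (n : nat).

Lemma indep_set1 (g : rel 'I_n) x : irreflexive g -> indep g [set x].
Proof.
move=> g_irr; apply/andP; split; first by apply/set0Pn; exists x; rewrite set11.
by apply/forall_inP => i /set1P ->; apply/forall_inP => j /set1P ->; rewrite g_irr.
Qed.

Lemma connect_neq_edge (e : rel 'I_n) x y : x != y -> connect e x y -> exists z, e x z.
Proof.
move=> xy /connectP [[|z p] /= hp y_last]; first by rewrite y_last eqxx in xy.
by exists z; case/andP: hp.
Qed.

Lemma connected_no_isolated (e : rel 'I_n) (i j : 'I_n) :
  (forall x y, connect e x y) -> i != j -> forall x, exists y, e x y.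
Proof.
move=> conn ij x; have [->|xi] := eqVneq x i; first exact: connect_neq_edge ij (conn i j).
exact: connect_neq_edge xi (conn x i).
Qed.

Lemma addedge_sub (e : rel 'I_n) i j : subrel e (addedge e i j).
Proof. by move=> x y exy; rewrite /addedge exy. Qed.

Lemma addedge_irreflexive (e : rel 'I_n) i j :
  irreflexive e -> i != j -> irreflexive (addedge e i j).
Proof.
move=> irr ij x; rewrite /addedge irr /=.
by have [->|] := eqVneq x i; rewrite ?(negbTE ij) ?andbF.
Qed.

Lemma indep_subset (g : rel 'I_n) (I J : {set 'I_n}) x :
  indep g I -> J \subset I -> x \in J -> indep g J.
Proof.
move=> /andP [_ hI] /subsetP sJ xJ; apply/andP; split; first by apply/set0Pn; exists x.
apply/forall_inP => i iJ; apply/forall_inP => j jJ.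
by move/forall_inP: hI => /(_ i (sJ i iJ)) /forall_inP /(_ j (sJ j jJ)).
Qed.

Lemma indep_subrel (e g : rel 'I_n) I : subrel e g -> indep g I -> indep e I.
Proof.
move=> eg /andP [I0 /forall_inP gI]; rewrite /indep I0.
apply/forall_inP => i iI; apply/forall_inP => j jI.
by apply: contra (forall_inP (gI i iI) j jI); apply: eg.
Qed.

Lemma nbr_subrel (e g : rel 'I_n) I : subrel e g -> nbr e I \subset nbr g I.
Proof.
move=> eg; apply/subsetP => j; rewrite !inE => /existsP [i /andP [iI eij]].
by apply/existsP; exists i; rewrite iI eg.
Qed.

End GraphFacts.

Section GapPolynomials.
Variables (R : realType) (n : nat) (a b : 'I_n -> R).

Lemma gapP_eval g I d : (gapP g a b I).[d] = gap g (alphad a b d) I.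
Proof.
rewrite /gapP /gap /wt hornerD hornerN !horner_sum.
by congr (_ - _); apply: eq_bigr => i _; rewrite !(hornerD, hornerCM, hornerX, hornerC).
Qed.

Lemma gapP_linear g I : gapP g a b I =
  (wt a (nbr g I) - wt a I)%:P + (wt b (nbr g I) - wt b I)%:P * 'X.
Proof.
have sum_alphaP (K : {set 'I_n}) : \sum_(i in K) alphaP a b i = (wt a K)%:P + (wt b K)%:P * 'X.
  by rewrite /alphaP /wt big_split /= -mulr_suml !rmorph_sum.
by rewrite /gapP !sum_alphaP !polyCB mulrBl addrACA opprD.
Qed.

Lemma wt_mono (alpha : 'I_n -> R) (A B : {set 'I_n}) :
  (forall i, 0 <= alpha i) -> A \subset B -> wt alpha A <= wt alpha B.
Proof.
move=> alpha_ge0 sAB; rewrite /wt [leRHS](big_setID A) /= (setIidPr sAB) lerDl.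
exact: sumr_ge0.
Qed.

Lemma gapP_admissible (e g : rel 'I_n) (dbar : R) I :
  0 < dbar -> subrel e g ->
  (forall d, 0 < d <= dbar -> (forall i, 0 <= alphad a b d i) /\
     forall J, indep e J -> wt (alphad a b d) J < wt (alphad a b d) (nbr e J)) ->
  indep g I -> admissible dbar (gapP g a b I).
Proof.
move=> dbar_gt0 eg stab gI; rewrite gapP_linear; apply: admissible_linear => // d hd.
have [alpha_ge0 stable] := stab d hd.
have := gapP_eval g I d; rewrite gapP_linear !(hornerD, hornerCM, hornerX, hornerC) => ->.
rewrite /gap subr_gt0; apply: lt_le_trans (stable I (indep_subrel eg gI)) _.
exact/wt_mono/nbr_subrel.
Qed.

End GapPolynomials.

Section RationalForm.
Variables (R : realType) (n : nat) (e ebar : rel 'I_n) (a b : 'I_n -> R) (dbar : R).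
Hypothesis dbar_gt0 : 0 < dbar.

Local Notation graph c := (if c then e else ebar).
Local Notation rf := (ratform e ebar a b dbar).

Definition factor (p : {set 'I_n} * bool) : {poly R} := gapP (graph p.2) a b p.1.

Hypothesis factor_admissible :
  forall p, indep (graph p.2) p.1 -> admissible dbar (factor p).

Lemma ratform_ext Q1 Q2 :
  (forall d, 0 < d <= dbar -> Q1 d = Q2 d) -> rf Q1 -> rf Q2.
Proof.
move=> H [P [l [hl [hQ hP]]]]; exists P, l; split => //; split => // d hd.
by rewrite -H // hQ.
Qed.

Lemma ratform_const c : 0 < c -> rf (fun _ => c).
Proof.
move=> hc; exists c%:P, [::]; split => //; split; last by rewrite hornerC.
by move=> d _; rewrite big_nil !hornerC divr1.
Qed.

Lemma ratform_alpha i : 0 < a i -> rf (fun d => alphad a b d i).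
Proof.
move=> hc; exists (alphaP a b i), [::]; split => //.
rewrite /alphaP /alphad; split; last by rewrite !(hornerD, hornerCM, hornerX, hornerC) mulr0 addr0.
by move=> d _; rewrite big_nil hornerC divr1 !(hornerD, hornerCM, hornerX, hornerC).
Qed.

Lemma ratform_invgap I c : indep (graph c) I ->
  rf (fun d => (gap (graph c) (alphad a b d) I)^-1).
Proof.
move=> hI; exists 1, [:: (I, c)]; split; first by move=> q; rewrite inE => /eqP ->.
split; last by rewrite hornerC.
by move=> d _; rewrite big_seq1 hornerC div1r gapP_eval.
Qed.

Lemma ratform_mul Q1 Q2 : rf Q1 -> rf Q2 -> rf (fun d => Q1 d * Q2 d).
Proof.
move=> [P1 [l1 [h1 [h2 h3]]]] [P2 [l2 [g1 [g2 g3]]]].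
exists (P1 * P2), (l1 ++ l2); split.
  by move=> p; rewrite mem_cat => /orP [/h1|/g1].
split; last by rewrite hornerM mulr_gt0.
by move=> d hd; rewrite h2 // g2 // big_cat /= !hornerM mulf_div.
Qed.

Definition zero_factors (l : seq ({set 'I_n} * bool)) := [seq p <- l | (factor p).[0] == 0].
Definition nonzero_factors (l : seq ({set 'I_n} * bool)) := [seq p <- l | (factor p).[0] != 0].

Lemma prod_monomials (z : seq ({set 'I_n} * bool)) :
  (forall p, p \in z -> factor p = ((factor p).[1])%:P * 'X) ->
  \prod_(p <- z) factor p = (\prod_(p <- z) (factor p).[1])%:P * 'X^(size z).
Proof.
elim: z => [|p z IH] H; first by rewrite !big_nil expr0 mulr1.
rewrite !big_cons IH => [|q qz]; last by apply: H; rewrite inE qz orbT.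
by rewrite {1}H ?mem_head // polyCM exprS -!mulrA; congr (_ * _); rewrite mulrCA.
Qed.

Lemma denominator_split l : (forall p, p \in l -> indep (graph p.2) p.1) ->
  [/\ \prod_(p <- l) factor p =
        (\prod_(p <- zero_factors l) (factor p).[1])%:P * 'X^(size (zero_factors l)) *
        \prod_(p <- nonzero_factors l) factor p,
      0 < \prod_(p <- zero_factors l) (factor p).[1],
      0 < (\prod_(p <- nonzero_factors l) factor p).[0] &
      forall d, 0 < d <= dbar -> 0 < (\prod_(p <- nonzero_factors l) factor p).[d]].
Proof.
move=> hl; have adm p : p \in l -> admissible dbar (factor p) by move/hl/factor_admissible.
have vanish p : p \in zero_factors l -> factor p = ((factor p).[1])%:P * 'X /\ 0 < (factor p).[1].
  by rewrite mem_filter => /andP [/eqP h0 pl]; apply: admissible_vanishing (adm p pl) h0.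
split.
- rewrite -prod_monomials => [|p /vanish []//].
  by rewrite /zero_factors /nonzero_factors !big_filter [LHS](bigID (fun p => (factor p).[0] == 0)).
- by rewrite big_seq; apply: prodr_gt0 => p /vanish [].
- rewrite horner_prod big_seq; apply: prodr_gt0 => p; rewrite mem_filter => /andP [h0 pl].
  by rewrite lt_def h0 (admissible_ge0 (adm p pl)).
- move=> d hd; rewrite horner_prod big_seq; apply: prodr_gt0 => p.
  by rewrite mem_filter => /andP [_ pl]; apply: admissible_pos (adm p pl) hd.
Qed.

Lemma ratform_add_le Q1 Q2 P1 l1 P2 l2 :
  (forall p, p \in l1 -> indep (graph p.2) p.1) ->
  (forall d, 0 < d <= dbar -> Q1 d = P1.[d] / (\prod_(p <- l1) factor p).[d]) ->
  0 < P1.[0] ->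
  (forall p, p \in l2 -> indep (graph p.2) p.1) ->
  (forall d, 0 < d <= dbar -> Q2 d = P2.[d] / (\prod_(p <- l2) factor p).[d]) ->
  0 < P2.[0] ->
  (size (zero_factors l2) <= size (zero_factors l1))%N ->
  rf (fun d => Q1 d + Q2 d).
Proof.
move=> h1 h2 h3 g1 g2 g3 hm.
have [E1 C1p N10 N1d] := denominator_split h1.
have [E2 C2p N20 N2d] := denominator_split g1.
set C1 := \prod_(p <- zero_factors l1) _ in E1 C1p.
set C2 := \prod_(p <- zero_factors l2) _ in E2 C2p.
set N1 := \prod_(p <- nonzero_factors l1) _ in E1 N10 N1d.
set N2 := \prod_(p <- nonzero_factors l2) _ in E2 N20 N2d.
set m1 := size (zero_factors l1) in E1 hm.
set m2 := size (zero_factors l2) in E2 hm.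
exists (P1 * N2 + P2 * (C1 / C2)%:P * 'X^(m1 - m2) * N1), (l1 ++ nonzero_factors l2).
split; first by move=> p; rewrite mem_cat mem_filter => /orP [/h1|/andP [_ /g1]].
split; last first.
  rewrite !(hornerD, hornerM, hornerC, hornerXn) ltr_pwDl ?mulr_gt0 //.
  by rewrite !mulr_ge0 ?invr_ge0 ?exprn_ge0 ?lexx ?ltW.
move=> d hd; have dp : 0 < d by case/andP: hd.
rewrite h2 // g2 // big_cat E1 E2 -/N2 !(hornerD, hornerM, hornerC, hornerXn).
have -> : d ^+ m1 = d ^+ (m1 - m2) * d ^+ m2 by rewrite -exprD subnK.
have u0 : d ^+ (m1 - m2) != 0 by rewrite expf_neq0 // gt_eqF.
have v0 : d ^+ m2 != 0 by rewrite expf_neq0 // gt_eqF.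
have n10 : N1.[d] != 0 by rewrite gt_eqF // N1d.
have n20 : N2.[d] != 0 by rewrite gt_eqF // N2d.
have c10 : C1 != 0 by rewrite gt_eqF.
have c20 : C2 != 0 by rewrite gt_eqF.
by field; rewrite u0 v0 c10 c20 n10 n20.
Qed.

(* closure under sums: put the sum over the denominator with more saturated factors *)
Lemma ratform_add Q1 Q2 : rf Q1 -> rf Q2 -> rf (fun d => Q1 d + Q2 d).
Proof.
move=> [P1 [l1 [h1 [h2 h3]]]] [P2 [l2 [g1 [g2 g3]]]].
have [hm|hm] := leqP (size (zero_factors l2)) (size (zero_factors l1)).
  exact: ratform_add_le h1 h2 h3 g1 g2 g3 hm.
apply: (ratform_ext (Q1 := fun d => Q2 d + Q1 d)) => [d _|]; first by rewrite addrC.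
exact: ratform_add_le g1 g2 g3 h1 h2 h3 (ltnW hm).
Qed.

(* non-empty sums only, since the empty sum 0 is not of the required form *)
Lemma ratform_sum (T : eqType) (r : seq T) (F : T -> R -> R) :
  r != [::] -> (forall i, i \in r -> rf (F i)) -> rf (fun d => \sum_(i <- r) F i d).
Proof.
elim: r => [//|x [|y r] IH] _ H.
  apply: (ratform_ext (Q1 := F x)); first by move=> d _; rewrite big_seq1.
  exact: H (mem_head _ _).
apply: (ratform_ext (Q1 := fun d => F x d + \sum_(i <- y :: r) F i d)).
  by move=> d _; rewrite [in RHS]big_cons.
apply: ratform_add; first by apply: H; rewrite mem_head.
by apply: IH => // i ir; apply: H; rewrite inE ir orbT.
Qed.

Lemma ratform_prod (T : eqType) (r : seq T) (F : T -> R -> R) :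
  (forall i, i \in r -> rf (F i)) -> rf (fun d => \prod_(i <- r) F i d).
Proof.
elim: r => [|x r IH] H.
  apply: (ratform_ext (Q1 := fun _ => 1)); first by move=> d _; rewrite big_nil.
  exact: ratform_const.
apply: (ratform_ext (Q1 := fun d => F x d * \prod_(i <- r) F i d)).
  by move=> d _; rewrite big_cons.
apply: ratform_mul; first by apply: H; rewrite mem_head.
by apply: IH => i ir; apply: H; rewrite inE ir orbT.
Qed.

Lemma ratform_sum_fin (T : finType) (P : pred T) (F : T -> R -> R) :
  (exists i, P i) -> (forall i, P i -> rf (F i)) -> rf (fun d => \sum_(i | P i) F i d).
Proof.
move=> [i0 Pi0] H.
apply: (ratform_ext (Q1 := fun d => \sum_(i <- [seq i <- index_enum T | P i]) F i d)).
  by move=> d _; rewrite big_filter.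
apply: ratform_sum => [|i]; last by rewrite mem_filter => /andP [/H].
have : i0 \in [seq i <- index_enum T | P i] by rewrite mem_filter Pi0 mem_index_enum.
by apply: contraTneq => ->.
Qed.

Hypothesis e_sub : subrel e ebar.
Hypothesis no_isolated : forall x, exists y, e x y.
Hypothesis a_gt0 : forall i, 0 < a i.

Lemma ratform_wt (K : {set 'I_n}) y : y \in K -> rf (fun d => wt (alphad a b d) K).
Proof.
move=> yK; apply: (ratform_sum_fin (P := mem K)) => [|i _]; last exact: ratform_alpha.
by exists y.
Qed.

Lemma nbr_nonempty c (J : {set 'I_n}) x : x \in J -> exists y, y \in nbr (graph c) J.
Proof.
move=> xJ; have [y hy] := no_isolated x; exists y; rewrite inE; apply/existsP; exists x.
by rewrite xJ; case: c => //; apply: e_sub.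
Qed.

Lemma prefset_facts (I : {set 'I_n}) s k x0 : s \in permutations (enum I) ->
  (k < size s)%N -> prefset s k.+1 \subset I /\ nth x0 s k \in prefset s k.+1.
Proof.
rewrite mem_permutations => hp hk; split.
  by apply/subsetP => x; rewrite inE => /mem_take; rewrite (perm_mem hp) mem_enum.
by rewrite inE -(nth_take x0 (ltnSn k)) mem_nth // size_takel.
Qed.

Lemma ratform_Tord c (I : {set 'I_n}) s : indep (graph c) I ->
  s \in permutations (enum I) -> rf (fun d => Tord (graph c) (alphad a b d) s).
Proof.
move=> hI hs; apply: ratform_prod => k _.
have x0 : 'I_n by case: s k {hs} => [[]|x].
have [hsub hmem] := prefset_facts x0 hs (ltn_ord k).
apply: (ratform_ext (Q1 := fun d =>
  alphad a b d (nth x0 s k) * (gap (graph c) (alphad a b d) (prefset s k.+1))^-1)).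
  by move=> d _; rewrite (nth_map x0).
apply: ratform_mul; first exact: ratform_alpha.
exact: ratform_invgap (indep_subset hI hsub hmem).
Qed.

Lemma ratform_Eord c (I : {set 'I_n}) s : indep (graph c) I ->
  s \in permutations (enum I) -> rf (fun d => Eord (graph c) (alphad a b d) s).
Proof.
move=> hI hs; apply: ratform_mul; last exact: ratform_Tord hI hs.
apply: ratform_sum => [|l _].
  have s_gt0 : (0 < size s)%N.
    move: hs hI; rewrite mem_permutations => /perm_size -> /andP [/set0Pn [x xI] _].
    by rewrite -cardE; apply/card_gt0P; exists x.
  by apply/eqP => E; have := mem_index_enum (Ordinal s_gt0); rewrite E.
have x0 : 'I_n by case: s l {hs} => [[]|x].
have [hsub hmem] := prefset_facts x0 hs (ltn_ord l).
have [y hy] := nbr_nonempty c hmem.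
apply: ratform_mul; first exact: ratform_wt hy.
exact: ratform_invgap (indep_subset hI hsub hmem).
Qed.

Lemma permutations_neq_nil (I : {set 'I_n}) : permutations (enum I) != [::].
Proof.
by apply/eqP => E; have := perm_refl (enum I); rewrite -mem_permutations E.
Qed.

Lemma ratform_sum_Eset c (P : pred {set 'I_n}) :
  (forall I, P I -> indep (graph c) I) -> (exists I, P I) ->
  rf (fun d => \sum_(I | P I) Eset (graph c) (alphad a b d) I).
Proof.
move=> hP ex; apply: ratform_sum_fin => // I /hP hI.
apply: ratform_sum (permutations_neq_nil I) _ => s; exact: ratform_Eord.
Qed.

Lemma ratform_one_plus_sum_Tset c (P : pred {set 'I_n}) :
  (forall I, P I -> indep (graph c) I) ->
  rf (fun d => 1 + \sum_(I | P I) Tset (graph c) (alphad a b d) I).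
Proof.
move=> hP; have [I0 PI0|P0] := pickP P; last first.
  apply: (ratform_ext (Q1 := fun _ => 1)); last exact: ratform_const.
  by move=> d _; rewrite big_pred0 ?addr0.
apply: ratform_add; first exact: ratform_const.
apply: ratform_sum_fin => [|I /hP hI]; first by exists I0.
apply: ratform_sum (permutations_neq_nil I) _ => s; exact: ratform_Tord.
Qed.

End RationalForm.

Theorem mainTheorem6 (R : realType) (n : nat) (e : rel 'I_n)
  (istar jstar : 'I_n) (a b : 'I_n -> R) (dbar : R) :
  (* G finite connected simple graph *)
  symmetric e -> irreflexive e -> (forall i j, connect e i j) ->
  (* i*, j* distinct and non-adjacent *)
  istar != jstar -> ~~ e istar jstar ->
  (* saturation assumption *)
  (forall i, 0 < a i) ->
  0 < dbar ->
  (forall d, 0 < d <= dbar ->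
     [/\ (forall i, 0 <= alphad a b d i),
         \sum_i alphad a b d i = 1 &
         (forall I, indep e I -> wt (alphad a b d) I < wt (alphad a b d) (nbr e I))]) ->
  (exists Ih, [/\ indep e Ih, wt a (nbr e Ih) - wt a Ih = 0 &
     forall I, indep e I -> wt a (nbr e I) - wt a I = 0 -> I = Ih]) ->
  let ebar := addedge e istar jstar in
  let star (I : {set 'I_n}) := (istar \in I) || (jstar \in I) in
  [/\ ratform e ebar a b dbar
        (fun d => \sum_(I | indep ebar I && star I) Eset ebar (alphad a b d) I),
      ratform e ebar a b dbar
        (fun d => 1 + \sum_(I | indep e I) Tset e (alphad a b d) I),
      ratform e ebar a b dbar
        (fun d => \sum_(I | indep e I && star I) Eset e (alphad a b d) I),
      ratform e ebar a b dbar
        (fun d => 1 + \sum_(I | indep ebar I) Tset ebar (alphad a b d) I) &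
      ratform e ebar a b dbar
        (fun d => \sum_(I | indep e I && ~~ star I) Eset e (alphad a b d) I)].
Proof.
move=> _ irr conn ij_neq ij_nadj a_gt0 dbar_gt0 stab _ ebar star.
have e_sub : subrel e ebar := @addedge_sub n e istar jstar.
have no_iso := connected_no_isolated conn ij_neq.
have adm p : indep (if p.2 then e else ebar) p.1 -> admissible dbar (factor e ebar a b p).
  have stab' := fun d (hd : 0 < d <= dbar) => let: And3 h _ h' := stab d hd in conj h h'.
  case: p => I [] /= hI; first exact: gapP_admissible dbar_gt0 (fun _ _ => id) stab' hI.
  exact: gapP_admissible dbar_gt0 e_sub stab' hI.
(* the sums over sets meeting {i*, j*} contain {i*}; the sum over sets
   avoiding {i*, j*} contains {z} for a neighbour z of i* *)
have [z iz] := no_iso istar.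
have zstar : ~~ star [set z].
  rewrite /star !inE negb_or; apply/andP; split; apply: contraTneq iz => <- //.
  by rewrite irr.
have i_e : indep e [set istar] := indep_set1 istar irr.
have i_ebar : indep ebar [set istar] := indep_set1 istar (addedge_irreflexive irr ij_neq).
have i_star : star [set istar] by rewrite /star set11.
pose sumE c := ratform_sum_Eset dbar_gt0 adm e_sub no_iso a_gt0 (c := c).
pose sumT c := ratform_one_plus_sum_Tset dbar_gt0 adm a_gt0 (c := c).
split.
- by apply: (sumE false) => [I /andP []|]; last exists [set istar]; rewrite ?i_ebar.
- exact: (sumT true).
- by apply: (sumE true) => [I /andP []|]; last exists [set istar]; rewrite ?i_e.
- exact: (sumT false).
- apply: (sumE true) => [I /andP []//|]; exists [set z].
  by rewrite zstar indep_set1.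
Qed.
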